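(* Under the hypotheses and notation of the setting below, a vector $x=x_1\varepsilon_1+x_2\varepsilon_2$ with $x_1,x_2\neq0$ is $q$-minimal and $g$-anisotropic (i.e. $q(x)\in\mathcal T$) iff $\beta,x_1,x_2\in\mathcal T$ and $\alpha_1x_1^2<_\nu\beta x_1x_2$ and $\alpha_2x_2^2<_\nu\beta x_1x_2$.
   Context: All semirings are commutative with $1$. A semiring $R$ is supertropical if $e:=1+1$ satisfies $e+e=e$ and, for all $x,y\in R$: if $ex\neq ey$ then $x+y\in\{x,y\}$, and if $ex=ey$ then $x+y=ey$. $eR$ is totally ordered by $u\le v\iff u+v=v$; write $x<_\nu y$ for $ex<ey$. $\mathcal T=R\setminus eR$, $\mathcal G=eR\setminus\{0\}$. Setting: $R$ is supertropical with $e\mathcal T=\mathcal G$, $\mathcal T\cdot\mathcal T\subseteq\mathcal T$, $\mathcal G$ cancellative under multiplication; $V$ is free with base $\varepsilon_1,\varepsilon_2$; $q$ is a quadratic form on $V$ (a map with $q(ax)=a^2q(x)$ and some symmetric bilinear companion $b$ with $q(x+y)=q(x)+q(y)+b(x,y)$); $\alpha_i=q(\varepsilon_i)$, $\beta=b(\varepsilon_1,\varepsilon_2)$, so $q(x_1\varepsilon_1+x_2\varepsilon_2)=\alpha_1x_1^2+\beta x_1x_2+\alpha_2x_2^2$. The minimal ordering on $V$: $x\le y\iff\exists z:\ x+z=y$; $x<y$ means $x\le y$, $x\neq y$. $x$ is $q$-minimal if no $x'<x$ has $q(x')=q(x)$. *)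

From HB Require Import structures.
From mathcomp Require Import all_boot all_order all_algebra.
Set Implicit Arguments. Unset Strict Implicit. Unset Printing Implicit Defensive.
Import Order.TTheory GRing.Theory.
Local Open Scope ring_scope.

Section Supertropical.
Variable R : comPzSemiRingType.

Definition e : R := 1 + 1.

Definition supertropical : Prop :=
  e + e = e /\
  (forall x y : R, e * x <> e * y -> x + y = x \/ x + y = y) /\
  (forall x y : R, e * x = e * y -> x + y = e * y).

Definition in_eR (x : R) : Prop := exists y, x = e * y.
Definition tang (x : R) : Prop := ~ in_eR x.
Definition ghost (x : R) : Prop := in_eR x /\ x <> 0.

(* order on eR : u <= v iff u + v = v ;  x <_nu y iff e x < e y *)
Definition nu_lt (x y : R) : Prop := e * x + e * y = e * y /\ e * x <> e * y.

Definition setting_hyp : Prop :=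
  supertropical /\
  (forall x, tang x -> ghost (e * x)) /\
  (forall g, ghost g -> exists x, tang x /\ e * x = g) /\
  (forall x y, tang x -> tang y -> tang (x * y)) /\
  (forall a b c, ghost a -> ghost b -> ghost c -> a * b = a * c -> b = c).

Definition V := (R * R)%type.
Definition vadd (x y : V) : V := (x.1 + y.1, x.2 + y.2).
Definition vscale (a : R) (x : V) : V := (a * x.1, a * x.2).
Definition eps1 : V := (1, 0).
Definition eps2 : V := (0, 1).
Definition vcomb (x1 x2 : R) : V := vadd (vscale x1 eps1) (vscale x2 eps2).

Definition is_quadratic_form (q : V -> R) (b : V -> V -> R) : Prop :=
  (forall a x, q (vscale a x) = a ^+ 2 * q x) /\
  (forall x y, b x y = b y x) /\
  (forall x y z, b (vadd x y) z = b x z + b y z) /\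
  (forall a x y, b (vscale a x) y = a * b x y) /\
  (forall x y, q (vadd x y) = q x + q y + b x y).

Definition vle (x y : V) : Prop := exists z, vadd x z = y.
Definition vlt (x y : V) : Prop := vle x y /\ x <> y.

Definition q_minimal (q : V -> R) (x : V) : Prop :=
  ~ (exists x', vlt x' x /\ q x' = q x).

End Supertropical.

From HB Require Import structures.
From mathcomp Require Import all_boot all_order all_algebra.
From mathcomp Require Import ring.
Set Implicit Arguments. Unset Strict Implicit.
Import GRing.Theory.
Local Open Scope ring_scope.

(* Write A = α1 x1², C = α2 x2², B = β x1 x2, so that q(x) = A + C + B.  In a
   supertropical semiring a sum is absorbed by its ν-largest term, and a ν-tie
   produces a ghost.  If q(x) is tangible and x is q-minimal, neither A (the
   value at x1 ε1 < x) nor C (the value at x2 ε2 < x) can absorb the sum, so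
   B strictly ν-dominates A + C; then q(x) = B, and B tangible forces β, x1, x2
   tangible.  Conversely, if B dominates, then q(x) = B is tangible, and any
   y < x is strictly ν-below x in one coordinate; cancellation in G makes the
   mixed term of y, hence q(y), strictly ν-smaller than B. *)

Section SupertropicalOrder.
Variable R : comPzSemiRingType.
Hypothesis HR : setting_hyp R.
Local Notation e := (e R).
Implicit Types a b c x y z : R.

Definition nu_le x y := e * x + e * y = e * y.

Lemma addee : e + e = e.
Proof. by case: HR => [[]]. Qed.

Lemma add_nu_neq x y : e * x <> e * y -> x + y = x \/ x + y = y.
Proof. by case: HR => [[_ [addx _]] _]; apply: addx. Qed.

Lemma add_nu_eq x y : e * x = e * y -> x + y = e * y.
Proof. by case: HR => [[_ [_ addx]] _]; apply: addx. Qed.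

Lemma mulee : e * e = e.
Proof. by rewrite {2}/e mulrDr mulr1 addee. Qed.

Lemma nu_le_refl x : nu_le x x.
Proof. by rewrite /nu_le -mulrDl addee. Qed.

Lemma nu_le_trans y x z : nu_le x y -> nu_le y z -> nu_le x z.
Proof. by rewrite /nu_le => lexy leyz; rewrite -leyz addrA lexy. Qed.

Lemma nu_le_mul2l c x y : nu_le x y -> nu_le (c * x) (c * y).
Proof. by rewrite /nu_le => lexy; rewrite mulrCA [e * (c * y)]mulrCA -mulrDr lexy. Qed.

Lemma nu_le_sqr x y : nu_le x y -> nu_le (x ^+ 2) (y ^+ 2).
Proof.
move=> lexy; rewrite !expr2; apply: (@nu_le_trans (x * y)); first exact: nu_le_mul2l.
by rewrite [x * y]mulrC; apply: nu_le_mul2l.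
Qed.

Lemma nu_le_addr x z : nu_le x (x + z).
Proof. by rewrite /nu_le mulrDr addrA (nu_le_refl x). Qed.

Lemma nu_lt_irr x : ~ nu_lt x x.
Proof. by case. Qed.

Lemma nu_le_lt_trans y x z : nu_le x y -> nu_lt y z -> nu_lt x z.
Proof.
move=> lexy [leyz neyz]; split; first exact: nu_le_trans leyz.
by move=> exz; apply: neyz; rewrite -leyz addrC -exz.
Qed.

Lemma add_nu_lt x y : nu_lt x y -> x + y = y.
Proof.
case=> lexy nexy; case: (add_nu_neq nexy) => // addx.
by case: nexy; rewrite -lexy -mulrDr addx.
Qed.

Lemma nu_trichotomy x y : [\/ nu_lt x y, e * x = e * y | nu_lt y x].
Proof.
have [exy|nexy] := eqVneq (e * x) (e * y); first exact: Or32.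
have nexy' : e * (e * x) <> e * (e * y) by rewrite !mulrA mulee; apply/eqP.
case: (add_nu_neq nexy') => [addx|addy].
- by apply: Or33; split; [rewrite addrC addx | apply/nesym/eqP].
- by apply: Or31; split; last apply/eqP.
Qed.

Lemma nu_lt_add x y z : nu_lt x z -> nu_lt y z -> nu_lt (x + y) z.
Proof.
move=> [lexz nexz] [leyz neyz]; split; first by rewrite mulrDr -addrA leyz lexz.
rewrite mulrDr; case: (nu_trichotomy x y) => [[lexy _]|exy|[leyx _]].
- by rewrite lexy.
- by rewrite exy -mulrDl addee.
- by rewrite addrC leyx.
Qed.

Lemma tang_ghost x : tang x -> ghost (e * x).
Proof. by case: HR => [_ [tg _]]; apply: tg. Qed.

Lemma tang_mul x y : tang x -> tang y -> tang (x * y).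
Proof. by case: HR => [_ [_ [_ [tm _]]]]; apply: tm. Qed.

Lemma ghost_mulIr a b c : ghost a -> ghost b -> ghost c -> a * b = a * c -> b = c.
Proof. by case: HR => [_ [_ [_ [_ gI]]]]; apply: gI. Qed.

Lemma tang_mull x y : tang (x * y) -> tang x.
Proof. by move=> txy [z xz]; apply: txy; exists (z * y); rewrite xz mulrA. Qed.

Lemma tang_mulr x y : tang (x * y) -> tang y.
Proof. by rewrite mulrC; apply: tang_mull. Qed.

Lemma tang_add_nu_neq x y : tang (x + y) -> e * x <> e * y.
Proof. by move=> txy /add_nu_eq exy; apply: txy; rewrite exy; exists y. Qed.

Lemma tang_nu_lt_addr x z : tang (x + z) -> x + z <> x -> nu_lt x (x + z).
Proof.
move=> txz nexz; split; first exact: nu_le_addr.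
have nexz' := tang_add_nu_neq txz.
case: (add_nu_neq nexz') => [//|addz exz].
by apply: nexz'; rewrite exz addz.
Qed.

(* Strictness is where cancellation in G is needed. *)
Lemma nu_lt_mul2l c x y : tang c -> tang x -> nu_lt y x -> nu_lt (c * y) (c * x).
Proof.
move=> tc tx [leyx neyx]; split; first exact: nu_le_mul2l.
have [gcx ncx0] := tang_ghost (tang_mul tc tx).
move=> ecyx; have [ey0|ney0] := eqVneq (e * y) 0.
  by apply: ncx0; rewrite -ecyx mulrCA ey0 mulr0.
have gy : ghost (e * y) by split; [exists y | apply/eqP].
apply: neyx; apply: (ghost_mulIr (tang_ghost tc) gy (tang_ghost tx)).
by rewrite [LHS]mulrACA [RHS]mulrACA mulee.
Qed.

Lemma tang_add3_nu_lt a b c :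
  tang (a + c + b) -> a + c + b <> a -> a + c + b <> c -> nu_lt (a + c) b.
Proof.
move=> tacb neA neC; case: (nu_trichotomy (a + c) b) => [//|eacb|ltb].
  by case: (tang_add_nu_neq tacb).
rewrite addrC (add_nu_lt ltb) in tacb neA neC.
case: (nu_trichotomy a c) => [/add_nu_lt //|eac|/add_nu_lt].
  by case: (tang_add_nu_neq tacb).
by rewrite addrC.
Qed.

Definition quad al1 al2 be y1 y2 : R := al1 * y1 ^+ 2 + al2 * y2 ^+ 2 + be * y1 * y2.

Lemma quadC al1 al2 be y1 y2 : quad al1 al2 be y1 y2 = quad al2 al1 be y2 y1.
Proof. by rewrite /quad; ring. Qed.

Lemma quad_nu_lt_mixed al1 al2 be x1 x2 y1 y2 :
  tang be -> tang x1 -> tang x2 -> nu_lt y1 x1 -> nu_le y2 x2 ->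
  nu_lt (al1 * x1 ^+ 2) (be * x1 * x2) -> nu_lt (al2 * x2 ^+ 2) (be * x1 * x2) ->
  nu_lt (quad al1 al2 be y1 y2) (be * x1 * x2).
Proof.
move=> tbe tx1 tx2 lty1 ley2 ltA ltC.
have [ley1 _] := lty1.
apply: nu_lt_add; first apply: nu_lt_add.
- by apply: nu_le_lt_trans ltA; apply/nu_le_mul2l/nu_le_sqr.
- by apply: nu_le_lt_trans ltC; apply/nu_le_mul2l/nu_le_sqr.
apply: (@nu_le_lt_trans (be * y1 * x2)); first by rewrite -!mulrA; do 2!apply: nu_le_mul2l.
rewrite ![be * _ * x2]mulrAC; exact: nu_lt_mul2l (tang_mul tbe tx2) tx1 lty1.
Qed.

End SupertropicalOrder.

Section BinaryQuadraticForm.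
Variable R : comPzSemiRingType.
Hypothesis HR : setting_hyp R.
Variables (q : V R -> R) (b : V R -> V R -> R).
Hypothesis Hq : is_quadratic_form q b.
Local Notation al1 := (q (eps1 R)).
Local Notation al2 := (q (eps2 R)).
Local Notation be := (b (eps1 R) (eps2 R)).
Local Notation quadq := (quad al1 al2 be).

Lemma vcombE (x1 x2 : R) : vcomb x1 x2 = (x1, x2).
Proof. by rewrite /vcomb /vadd /vscale /= !mulr1 !mulr0 addr0 add0r. Qed.

Lemma qE (y1 y2 : R) : q (y1, y2) = quadq y1 y2.
Proof.
case: Hq => [qZ [bC [_ [bZ qD]]]].
by rewrite -vcombE /vcomb qD !qZ bZ bC bZ (bC (eps2 R)) /quad; ring.
Qed.

Lemma vlt_nu_lt (y1 y2 x1 x2 : R) : tang x1 -> tang x2 ->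
  vlt (y1, y2) (x1, x2) -> nu_lt y1 x1 /\ nu_le y2 x2 \/ nu_lt y2 x2 /\ nu_le y1 x1.
Proof.
move=> tx1 tx2 [[[z1 z2] [ex1 ex2]] neyx]; subst x1 x2.
have [ey1|ney1] := eqVneq (y1 + z1) y1.
- right; split; last exact: nu_le_addr.
  by apply: (tang_nu_lt_addr HR tx2) => ey2; apply: neyx; rewrite ey1 ey2.
- by left; split; [apply: (tang_nu_lt_addr HR tx1); apply/eqP | apply: nu_le_addr].
Qed.

Lemma minimal_tang_dominant (x1 x2 : R) : x1 <> 0 -> x2 <> 0 ->
  q_minimal q (x1, x2) -> tang (q (x1, x2)) ->
  nu_lt (al1 * x1 ^+ 2 + al2 * x2 ^+ 2) (be * x1 * x2).
Proof.
move=> nx1 nx2 minx; rewrite qE => tqx.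
have below (y : V R) (z : V R) : vadd y z = (x1, x2) -> y <> (x1, x2) ->
    q y <> quadq x1 x2.
  by move=> yzx neyx eqy; apply: minx; exists y; split; [split; [exists z|] | rewrite qE].
apply: (tang_add3_nu_lt HR tqx) => [eqA|eqC].
- apply: (below (x1, 0) (0, x2)); first by rewrite /vadd /= addr0 add0r.
    by case=> /esym /nx2.
  by rewrite qE /quad eqA expr0n mulr0n !mulr0 !addr0.
- apply: (below (0, x2) (x1, 0)); first by rewrite /vadd /= addr0 add0r.
    by case=> /esym /nx1.
  by rewrite qE /quad eqC expr0n mulr0n !mulr0 mul0r add0r addr0.
Qed.

Lemma q_mixed_dominant (x1 x2 : R) :
  nu_lt (al1 * x1 ^+ 2 + al2 * x2 ^+ 2) (be * x1 * x2) -> q (x1, x2) = be * x1 * x2.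
Proof. by move=> ltB; rewrite qE /quad (add_nu_lt HR ltB). Qed.

Lemma dominant_minimal (x1 x2 : R) : tang be -> tang x1 -> tang x2 ->
  nu_lt (al1 * x1 ^+ 2) (be * x1 * x2) -> nu_lt (al2 * x2 ^+ 2) (be * x1 * x2) ->
  q_minimal q (x1, x2).
Proof.
move=> tbe tx1 tx2 ltA ltC [[y1 y2] [ltyx]].
rewrite (q_mixed_dominant (nu_lt_add HR ltA ltC)) qE.
move=> qyB; apply: (@nu_lt_irr _ (be * x1 * x2)); rewrite -{1}qyB.
case: (vlt_nu_lt tx1 tx2 ltyx) => [[lty1 ley2] | [lty2 ley1]].
- exact: quad_nu_lt_mixed.
- rewrite quadC [X in nu_lt _ X]mulrAC; rewrite mulrAC in ltA ltC.
  exact: quad_nu_lt_mixed.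
Qed.

End BinaryQuadraticForm.

Theorem corollary6p8 (R : comPzSemiRingType) (q : V R -> R) (b : V R -> V R -> R)
    (x1 x2 : R) :
  setting_hyp R -> is_quadratic_form q b ->
  x1 <> 0 -> x2 <> 0 ->
  let al1 := q (eps1 R) in let al2 := q (eps2 R) in
  let be := b (eps1 R) (eps2 R) in
  (q_minimal q (vcomb x1 x2) /\ tang (q (vcomb x1 x2))) <->
  (tang be /\ tang x1 /\ tang x2 /\
   nu_lt (al1 * x1 ^+ 2) (be * x1 * x2) /\ nu_lt (al2 * x2 ^+ 2) (be * x1 * x2)).
Proof.
move=> HR Hq nx1 nx2 al1 al2 be; rewrite vcombE.
split=> [[minx tqx] | [tbe [tx1 [tx2 [ltA ltC]]]]].
- have ltB := minimal_tang_dominant HR Hq nx1 nx2 minx tqx.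
  rewrite (q_mixed_dominant HR Hq ltB) in tqx.
  have tbex1 := tang_mull tqx.
  split; first exact: tang_mull tbex1.
  split; first exact: tang_mulr tbex1.
  split; first exact: tang_mulr tqx.
  by split; apply: nu_le_lt_trans ltB; [|rewrite addrC]; apply: nu_le_addr.
- split; first exact: (dominant_minimal HR Hq).
  rewrite (q_mixed_dominant HR Hq (nu_lt_add HR ltA ltC)).
  exact/tang_mul/tx2/tang_mul.
Qed.
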